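(* Let $I\subset\mathbb{R}$ be an interval, $a,b\in I$ with $a<b$, and let $f:I\to\mathbb{R}$ be absolutely continuous on the interior $I^{\circ}$ of $I$ with $f''\in L[a,b]$, and suppose $|f''|$ belongs to the class $Q(I)$. If $f(a)=f(b)=f\left(\frac{a+b}{2}\right)$, then \[ \left|\frac{1}{b-a}\int_a^b f(x)\,dx-f\left(\frac{a+b}{2}\right)\right|\le \frac{(b-a)^2}{6}\left(\frac{12\ln 2-8\ln 3+1}{2}\right)\left[|f''(a)|+|f''(b)|\right]. \] If moreover $M>0$ is such that $|f''(x)|<M$ for all $x\in[a,b]$, then \[ \left|\frac{1}{b-a}\int_a^b f(x)\,dx-f\left(\frac{a+b}{2}\right)\right|\le \frac{(b-a)^2}{3}\left(\frac{12\ln 2-8\ln 3+1}{2}\right)M. \]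
   Context: A function $g:I\to\mathbb{R}$ belongs to the class $Q(I)$ (is a Godunova–Levin function) if $g$ is non-negative and for all $x,y\in I$ and $t\in(0,1)$, \[ g(tx+(1-t)y)\le \frac{g(x)}{t}+\frac{g(y)}{1-t}. \] *)

From HB Require Import structures.
From mathcomp Require Import all_boot all_order all_algebra.
From mathcomp Require Import all_classical all_reals all_analysis.
Set Implicit Arguments. Unset Strict Implicit. Unset Printing Implicit Defensive.
Import Order.TTheory GRing.Theory Num.Theory.
Import numFieldNormedType.Exports.
Local Open Scope classical_set_scope.
Local Open Scope ring_scope.

Definition GL_class {R : realType} (I : set R) (g : R -> R) : Prop :=
  (forall x, I x -> 0 <= g x) /\
  (forall x y t, I x -> I y -> 0 < t < 1 ->
     g (t * x + (1 - t) * y) <= g x / t + g y / (1 - t)).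

Definition abs_continuous_on {R : realType} (c d : R) (f : R -> R) : Prop :=
  forall eps : R, 0 < eps -> exists2 delta : R, 0 < delta &
    forall (n : nat) (u v : nat -> R),
      (forall i, (i < n)%N -> c <= u i /\ u i <= v i /\ v i <= d) ->
      (forall i, (i.+1 < n)%N -> v i <= u i.+1) ->
      \sum_(i < n) (v i - u i) < delta ->
      \sum_(i < n) `|f (v i) - f (u i)| < eps.

Definition abs_continuous_in {R : realType} (E : set R) (f : R -> R) : Prop :=
  forall c d, c <= d -> `[c, d] `<=` E -> abs_continuous_on c d f.

From HB Require Import structures.
From mathcomp Require Import all_boot all_order all_algebra.
From mathcomp Require Import all_classical all_reals all_analysis.
From mathcomp Require Import ring lra.
Import Order.TTheory GRing.Theory Num.Theory.
Import numFieldNormedType.Exports.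
Local Open Scope classical_set_scope.
Local Open Scope ring_scope.

(* Let h = b - a, m = (a + b) / 2 and let P be a primitive of f. Since
   f a = f m = f b, two integrations by parts on each half give
     P b - P a - h f m = int_a^m k_L f'' + int_m^b k_R f'',
   with the Peano kernels k_L x = (x - a)^2 / 2 - h (x - a) / 6 and
   k_R x = (b - x)^2 / 2 - h (b - x) / 6; the identity is obtained by
   differentiating P - k' f + k f'.  The Godunova-Levin inequality at
   t = (b - x) / h bounds |f'' x| by |f'' a| h / (b - x) + |f'' b| h / (x - a).
   Each kernel changes sign once (at a + h / 3, resp. b - h / 3), and |k_L|, |k_R|
   times this majorant have explicit primitives involving ln (b - x), ln (x - a);
   comparing derivatives on the four subintervals bounds the right-hand side by
   h^3 (12 ln 2 - 8 ln 3 + 1) / 12 (|f'' a| + |f'' b|). *)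

Section real_calculus.
Context {R : realType}.
Implicit Types (f G : R -> R) (a b c d x : R).

Lemma interior_is_interval {I : set R} : is_interval I -> is_interval (interior I).
Proof.
move=> iI x z Ix Iz y /andP[xy yz].
have [<-//|nxy] := eqVneq x y; have [->//|nyz] := eqVneq y z.
have {nxy}xy : x < y by rewrite lt_neqAle nxy.
have {nyz}yz : y < z by rewrite lt_neqAle nyz.
apply/nbhs_ballP; exists (Num.min (y - x) (z - y)); first by rewrite /= lt_min !subr_gt0 xy yz.
move=> w; rewrite -ball_normE /ball_ /= lt_min !ltr_norml => /andP[/andP[? ?] /andP[? ?]].
by apply: (iI x z); [exact: interior_subset|exact: interior_subset|apply/andP; split; lra].
Qed.

Lemma interior_widen {I : set R} {a} : interior I a ->
  exists2 e, 0 < e & interior I (a - e) /\ interior I (a + e).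
Proof.
move=> Ia; have : nbhs a (interior I) by apply: open_nbhs_nbhs; split => //; exact: open_interior.
move/nbhs_ballP => [e /= e0 aeI]; exists (e / 2); first by rewrite divr_gt0.
by split; apply: aeI; rewrite -ball_normE /ball_ /= ?opprD ?opprB ?addrA ?subrr ?add0r ?addrK
  ?normrN gtr0_norm ?divr_gt0 // ltr_pdivrMr // ltr_pMr // ltr1n.
Qed.

Lemma is_derive_integral f c d x :
  (forall y, c <= y <= d -> {for y, continuous f}) -> c < x < d ->
  is_derive x 1 (fun y => \int[lebesgue_measure]_(t in `[c, y]) f t) (f x).
Proof.
move=> cf /andP[cx xd].
have intf : lebesgue_measure.-integrable `[c, d] (EFin \o f).
  apply: continuous_compact_integrable; first exact: segment_compact.
  by apply: continuous_in_subspaceT => y; rewrite inE /= in_itv /=; exact: cf.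
have xcd : c <= x <= d by rewrite !ltW.
have [dF Fx] := continuous_FTC1_closed xd intf cx (cf x xcd).
by have := derivableP dF; rewrite -derive1E Fx.
Qed.

Lemma integral_primitive f G a b : a < b ->
  (forall x, a <= x <= b -> is_derive x 1 G (f x)) ->
  (forall x, a <= x <= b -> {for x, continuous f}) ->
  \int[lebesgue_measure]_(x in `[a, b]) f x = G b - G a.
Proof.
move=> ab dG cf.
have cG x : a <= x <= b -> {for x, continuous G}.
  move=> xab; apply: differentiable_continuous; apply/derivable1_diffP.
  exact: (ex_derive (is_derive := dG x xab)).
have oab x : x \in `]a, b[ -> a <= x <= b by rewrite in_itv /= => /andP[/ltW -> /ltW ->].
rewrite /Rintegral (@continuous_FTC2 _ f G a b ab) //.
- by apply: continuous_in_subspaceT => x; rewrite inE /= in_itv /=; exact: cf.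
- split; first by move=> x /oab xab; exact: (ex_derive (is_derive := dG x xab)).
  + by apply: cvg_at_right_filter; apply: cG; rewrite lexx ltW.
  + by apply: cvg_at_left_filter; apply: cG; rewrite lexx ltW.
- by move=> x /oab xab; rewrite derive1E; exact: (derive_val (is_derive := dG x xab)).
Qed.

Lemma interior_primitive (I : set R) f a b : is_interval I ->
  interior I a -> interior I b -> a < b ->
  (forall x, interior I x -> {for x, continuous f}) ->
  exists2 P : R -> R, (forall x, a <= x <= b -> is_derive x 1 P (f x))
    & \int[lebesgue_measure]_(x in `[a, b]) f x = P b - P a.
Proof.
move=> iI Ia Ib ab cf.
have [ea ea0 [Iea _]] := interior_widen Ia.
have [eb eb0 [_ Ieb]] := interior_widen Ib.
have {}cf x : a - ea <= x <= b + eb -> {for x, continuous f}.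
  by move=> /(interior_is_interval iI _ _ Iea Ieb)/cf.
have in_ab x : a <= x <= b -> a - ea < x < b + eb.
  by move=> /andP[? ?]; apply/andP; split; lra.
pose P y := \int[lebesgue_measure]_(t in `[a - ea, y]) f t.
have dP x : a <= x <= b -> is_derive x 1 P (f x).
  by move=> /in_ab; exact: is_derive_integral.
exists P => //; apply: integral_primitive ab dP _ => x /in_ab /andP[? ?].
by apply: cf; rewrite !ltW.
Qed.

End real_calculus.

Lemma GL_class_le {R : realType} (I : set R) (g : R -> R) a b x :
  GL_class I g -> I a -> I b -> a < x < b ->
  g x <= g a * (b - a) / (b - x) + g b * (b - a) / (x - a).
Proof.
move=> [_ GL] Ia Ib /andP[ax xb].
have ba0 : b - a != 0 by rewrite subr_eq0 gt_eqF // (lt_trans ax).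
have bx0 : b - x != 0 by rewrite subr_eq0 gt_eqF.
have xa0 : x - a != 0 by rewrite subr_eq0 gt_eqF.
have t01 : 0 < (b - x) / (b - a) < 1.
  by rewrite divr_gt0 ?ltr_pdivrMr ?mul1r ?subr_gt0 //=; lra.
have := GL a b _ Ia Ib t01.
rewrite (_ : (b - x) / (b - a) * a + (1 - (b - x) / (b - a)) * b = x); last by field.
by rewrite (_ : 1 - (b - x) / (b - a) = (x - a) / (b - a)) ?invf_div ?mulrA //; field.
Qed.

Lemma ln_const_ge0 {R : realType} : 0 <= 12 * ln 2 - 8 * ln 3 + 1 :> R.
Proof.
(* ln (9 / 8) <= 1 / 8 *)
have : -1 < 8^-1 :> R by rewrite (lt_trans (ltrN10 R)) // invr_gt0.
move/le_ln1Dx.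
have -> : 1 + 8^-1 = (3 * 3) / (2 * (2 * 2)) :> R by field.
by rewrite ln_div ?posrE // !lnM ?posrE //; lra.
Qed.

Section ln_derivatives.
Context {R : realType}.
Implicit Types (c x : R).

Lemma is_derive_ln_cst_sub {c x} : x < c -> is_derive x 1 (fun y => ln (c - y)) (- (c - x)^-1).
Proof.
(* Instance resolution of [is_derive] computes a derivative, using [dln] for ln;
   only its value is left to check.  The same pattern is used below. *)
rewrite -subr_gt0 => /is_derive1_ln dln.
by apply: is_derive_eq; rewrite /GRing.scale /=; ring.
Qed.

Lemma is_derive_ln_sub_cst {c x} : c < x -> is_derive x 1 (fun y => ln (y - c)) (x - c)^-1.
Proof.
rewrite -subr_gt0 => /is_derive1_ln dln.
by apply: is_derive_eq; rewrite /GRing.scale /=; ring.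
Qed.

End ln_derivatives.

Section derivative_comparison.
Context {R : realType}.
Implicit Types (E G e g k u w : R -> R) (c p d : R).

Lemma ler_norm_sub_derive E G e g c d : c <= d ->
  {within `[c, d], continuous E} -> {within `[c, d], continuous G} ->
  (forall x, c < x < d -> is_derive x 1 E (e x) /\ is_derive x 1 G (g x)) ->
  (forall x, c < x < d -> `|e x| <= g x) ->
  `|E d - E c| <= G d - G c.
Proof.
move=> cd cE cG dEG eg.
have incr (F dF : R -> R) : {within `[c, d], continuous F} ->
    (forall x, c < x < d -> is_derive x 1 F (dF x)) ->
    (forall x, c < x < d -> 0 <= dF x) -> F c <= F d.
  move=> cF dFx dF0; apply: (@ger0_derive1_le_cc _ F c d); rewrite ?in_itv /= ?lexx ?cd //.
  - by move=> x; rewrite in_itv /= => /dFx dFx'; exact: (ex_derive (is_derive := dFx')).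
  - move=> x; rewrite in_itv /= => xcd.
    by rewrite derive1E (derive_val (is_derive := dFx x xcd)) dF0.
have le1 : G c + E c <= G d + E d.
  apply: (incr (G + E) (fun x => g x + e x)); first exact: within_continuousD.
    by move=> x /dEG[? ?]; exact: is_deriveD.
  by move=> x /eg; rewrite ler_norml => /andP[]; lra.
have le2 : G c - E c <= G d - E d.
  apply: (incr (G - E) (fun x => g x - e x)); first exact: within_continuousB.
    by move=> x /dEG[? ?]; exact: is_deriveB.
  by move=> x /eg; rewrite ler_norml => /andP[]; lra.
by rewrite ler_norml; apply/andP; split; lra.
Qed.

Lemma ler_norm_sub_sign_change E G k u w c p d : c <= p <= d ->
  {within `[c, d], continuous E} -> {within `[c, d], continuous G} ->
  (forall x, c < x < d -> is_derive x 1 E (k x * u x) /\ is_derive x 1 G (- k x * w x)) ->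
  (forall x, c < x < p -> k x <= 0) -> (forall x, p < x < d -> 0 <= k x) ->
  (forall x, c < x < d -> `|u x| <= w x) ->
  `|E d - E c| <= (G p - G c) + (G p - G d).
Proof.
move=> /andP[cp pd] cE cG dEG kneg kpos uw.
have [cpd cdp] : `[c, p] `<=` `[c, d] /\ `[p, d] `<=` `[c, d].
  by split; apply: subset_itv; rewrite bnd_simp.
have in_cd x : c < x < p \/ p < x < d -> c < x < d.
  by case=> /andP[? ?]; apply/andP; split; lra.
rewrite (_ : E d - E c = (E p - E c) + (E d - E p)); last by ring.
apply: le_trans (ler_normD _ _) _; apply: lerD.
- apply: (ler_norm_sub_derive E G (fun x => k x * u x) (fun x => - k x * w x)) => //.
  + exact: continuous_subspaceW cpd cE.
  + exact: continuous_subspaceW cpd cG.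
  + by move=> x xcp; apply: dEG; apply: in_cd; left.
  + move=> x xcp; rewrite normrM ler0_norm ?kneg //.
    by apply: ler_wpM2l; [rewrite oppr_ge0 kneg | apply: uw; apply: in_cd; left].
- rewrite (_ : G p - G d = - G d - - G p); last by ring.
  apply: (ler_norm_sub_derive E (fun y => - G y) (fun x => k x * u x) (fun x => k x * w x)) => //.
  + exact: continuous_subspaceW cdp cE.
  + by move=> x; apply: cvgN; exact: continuous_subspaceW cdp cG x.
  + move=> x xpd; have [dE dG] := dEG x (in_cd x (or_intror xpd)).
    by split => //; apply: is_derive_eq; rewrite mulNr opprK.
  + move=> x xpd; rewrite normrM ger0_norm ?kpos //.
    by apply: ler_wpM2l; [rewrite kpos | apply: uw; apply: in_cd; right].
Qed.

End derivative_comparison.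

Section peano_kernel.
Context {R : realType}.
Implicit Types (c r x : R).

Definition peano_kernel c r x := (x - c) ^+ 2 / 2 + r * (x - c).

Definition peano_primitive (P f f1 : R -> R) c r x :=
  P x - (x - c + r) * f x + peano_kernel c r x * f1 x.

(* The kernel has second derivative 1, so the terms in f and f1 cancel. *)
Lemma is_derive_peano_primitive (P f f1 : R -> R) c r x d2 :
  is_derive x 1 P (f x) -> is_derive x 1 f (f1 x) -> is_derive x 1 f1 d2 ->
  is_derive x 1 (peano_primitive P f f1 c r) (peano_kernel c r x * d2).
Proof.
move=> dP df df1; apply: is_derive_eq.
by rewrite /GRing.scale /=; field.
Qed.

End peano_kernel.

Section majorant_primitives.
Context {R : realType}.
Variables (a b α β : R).
Hypothesis ab : a < b.
Let h := b - a.

Definition GL_majorant x := α * h / (b - x) + β * h / (x - a).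

Definition left_primitive x := β * h * (h * (x - a) / 6 - (x - a) ^+ 2 / 4)
  + α * h * (5 * h * x / 6 + (b - x) ^+ 2 / 4 + h ^+ 2 / 3 * ln (b - x)).

Definition right_primitive x := α * h * (h * x / 6 + (b - x) ^+ 2 / 4)
  + β * h * (5 * h * x / 6 - (x - a) ^+ 2 / 4 - h ^+ 2 / 3 * ln (x - a)).

Lemma derivable_left_primitive x : x < b -> derivable left_primitive x 1.
Proof.
by move=> xb; have dln := is_derive_ln_cst_sub xb; exact: ex_derive.
Qed.

Lemma derivable_right_primitive x : a < x -> derivable right_primitive x 1.
Proof.
by move=> ax; have dln := is_derive_ln_sub_cst ax; exact: ex_derive.
Qed.

Lemma is_derive_left_primitive x : a < x < b ->
  is_derive x 1 left_primitive (- peano_kernel a (- (h / 6)) x * GL_majorant x).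
Proof.
move=> /andP[ax xb]; have dln := is_derive_ln_cst_sub xb; apply: is_derive_eq.
rewrite /GRing.scale /= /peano_kernel /GL_majorant /h; field.
by rewrite !subr_eq0 !gt_eqF.
Qed.

Lemma is_derive_right_primitive x : a < x < b ->
  is_derive x 1 right_primitive (- peano_kernel b (h / 6) x * GL_majorant x).
Proof.
move=> /andP[ax xb]; have dln := is_derive_ln_sub_cst ax; apply: is_derive_eq.
rewrite /GRing.scale /= /peano_kernel /GL_majorant /h; field.
by rewrite !subr_eq0 !gt_eqF.
Qed.

Lemma majorant_primitives_total (m := (a + b) / 2) (p := a + h / 3) (q := b - h / 3) :
  ((left_primitive p - left_primitive a) + (left_primitive p - left_primitive m))
  + ((right_primitive m - right_primitive q) + (right_primitive b - right_primitive q))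
  = h ^+ 3 / 12 * (12 * ln 2 - 8 * ln 3 + 1) * (α + β).
Proof.
have h0 : 0 < h by rewrite subr_gt0.
have ln23 : ln (h * (2 / 3)) = ln h + ln 2 - ln 3.
  by rewrite lnM ?ln_div ?posrE ?divr_gt0 //; ring.
have ln2 : ln (h / 2) = ln h - ln 2 by rewrite ln_div ?posrE.
rewrite /left_primitive /right_primitive.
have -> : b - p = h * (2 / 3) by rewrite /p /h; field.
have -> : q - a = h * (2 / 3) by rewrite /q /h; field.
have -> : b - m = h / 2 by rewrite /m /h; field.
have -> : m - a = h / 2 by rewrite /m /h; field.
rewrite subrr subrr ln23 ln2 /p /q /m.
by rewrite /h; field.
Qed.

End majorant_primitives.

Section peano_half_bounds.
Context {R : realType}.

Lemma peano_left_half_bound (a b α β : R) (E f2 : R -> R) (h := b - a) (m := (a + b) / 2) :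
  a < b ->
  (forall x, a <= x <= m -> is_derive x 1 E (peano_kernel a (- (h / 6)) x * f2 x)) ->
  (forall x, a < x < b -> `|f2 x| <= GL_majorant a b α β x) ->
  `|E m - E a| <= (left_primitive a b α β (a + h / 3) - left_primitive a b α β a)
                   + (left_primitive a b α β (a + h / 3) - left_primitive a b α β m).
Proof.
move=> ab dE f2_le; subst h m.
apply: (ler_norm_sub_sign_change _ _ (peano_kernel a (- ((b - a) / 6))) f2 (GL_majorant a b α β)).
- by apply/andP; split; lra.
- apply: derivable_within_continuous => x; rewrite in_itv /= => xm.
  exact: (ex_derive (is_derive := dE x xm)).
- apply: derivable_within_continuous => x; rewrite in_itv /= => /andP[ax xm].
  by apply: derivable_left_primitive; lra.
- move=> x /andP[ax xm]; split; first by apply: dE; apply/andP; split; lra.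
  by apply: is_derive_left_primitive; apply/andP; split; lra.
- by move=> x /andP[ax xp]; rewrite /peano_kernel; nra.
- by move=> x /andP[px xm]; rewrite /peano_kernel; nra.
- by move=> x /andP[ax xm]; apply: f2_le; apply/andP; split; lra.
Qed.

Lemma peano_right_half_bound (a b α β : R) (E f2 : R -> R) (h := b - a) (m := (a + b) / 2) :
  a < b ->
  (forall x, m <= x <= b -> is_derive x 1 E (peano_kernel b (h / 6) x * f2 x)) ->
  (forall x, a < x < b -> `|f2 x| <= GL_majorant a b α β x) ->
  `|E b - E m| <= (right_primitive a b α β m - right_primitive a b α β (b - h / 3))
                   + (right_primitive a b α β b - right_primitive a b α β (b - h / 3)).
Proof.
move=> ab dE f2_le; subst h m.
set G := right_primitive a b α β; set k := peano_kernel b ((b - a) / 6).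
set m := (a + b) / 2; set q := b - (b - a) / 3.
(* Here the kernel is nonnegative first, then nonpositive: bound - E against - G. *)
rewrite -normrN (_ : - (E b - E m) = - E b - - E m); last by ring.
rewrite (_ : G m - G q + (G b - G q) = (- G q - - G m) + (- G q - - G b)); last by ring.
rewrite {}/m {}/q.
apply: (ler_norm_sub_sign_change (fun y => - E y) (fun y => - G y) (fun x => - k x) f2
  (GL_majorant a b α β)).
- by apply/andP; split; lra.
- apply: derivable_within_continuous => x; rewrite in_itv /= => /dE dEx.
  exact: ex_derive.
- apply: derivable_within_continuous => x; rewrite in_itv /= => /andP[mx xb].
  by apply: derivableN; apply: derivable_right_primitive; lra.
- move=> x /andP[mx xb]; split.
    have dEx : is_derive x 1 E (k x * f2 x) by apply: dE; apply/andP; split; lra.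
    by apply: is_derive_eq; rewrite /GRing.scale /=; ring.
  have dGx : is_derive x 1 G (- k x * GL_majorant a b α β x).
    by apply: is_derive_right_primitive; apply/andP; split; lra.
  by apply: is_derive_eq; ring.
- by move=> x /andP[mx xq]; rewrite /k /peano_kernel; nra.
- by move=> x /andP[qx xb]; rewrite /k /peano_kernel; nra.
- by move=> x /andP[mx xb]; apply: f2_le; apply/andP; split; lra.
Qed.

End peano_half_bounds.

Lemma midpoint_primitive_le {R : realType} {a b α β : R} {P f f1 f2 : R -> R} :
  a < b ->
  (forall x, a <= x <= b ->
     [/\ is_derive x 1 P (f x), is_derive x 1 f (f1 x) & is_derive x 1 f1 (f2 x)]) ->
  (forall x, a < x < b -> `|f2 x| <= GL_majorant a b α β x) ->
  f a = f ((a + b) / 2) -> f b = f ((a + b) / 2) ->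
  `|P b - P a - (b - a) * f ((a + b) / 2)|
    <= (b - a) ^+ 3 / 12 * (12 * ln 2 - 8 * ln 3 + 1) * (α + β).
Proof.
move=> ab dPf f2_le fam fbm.
have dE c r x : a <= x <= b ->
    is_derive x 1 (peano_primitive P f f1 c r) (peano_kernel c r x * f2 x).
  by case/dPf => dP df df1; exact: is_derive_peano_primitive.
set EL := peano_primitive P f f1 a (- ((b - a) / 6)).
set ER := peano_primitive P f f1 b ((b - a) / 6).
have -> : P b - P a - (b - a) * f ((a + b) / 2)
    = (EL ((a + b) / 2) - EL a) + (ER b - ER ((a + b) / 2)).
  by rewrite /EL /ER /peano_primitive /peano_kernel fam fbm; field.
have := majorant_primitives_total a b α β ab; rewrite /= => <-.
apply: le_trans (ler_normD _ _) _; apply: lerD.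
- apply: (peano_left_half_bound a b α β EL f2) => // x /andP[ax xm]; apply: dE.
  by apply/andP; split; lra.
- apply: (peano_right_half_bound a b α β ER f2) => // x /andP[mx xb]; apply: dE.
  by apply/andP; split; lra.
Qed.

Lemma GL_midpoint_le {R : realType} {I : set R} {a b : R} {f : R -> R} :
  is_interval I -> interior I a -> interior I b -> a < b ->
  (forall x, interior I x -> derivable f x 1 /\ derivable (derive1 f) x 1) ->
  GL_class I (fun x => `|derive1 (derive1 f) x|) ->
  f a = f ((a + b) / 2) -> f b = f ((a + b) / 2) ->
  `|(b - a)^-1 * (\int[lebesgue_measure]_(x in `[a, b]) f x) - f ((a + b) / 2)|
    <= (b - a) ^+ 2 / 6 * ((12 * ln 2 - 8 * ln 3 + 1) / 2)
       * (`|derive1 (derive1 f) a| + `|derive1 (derive1 f) b|).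
Proof.
move=> iI Ia Ib ab dfI GLf fam fbm.
set f1 := derive1 f; set f2 := derive1 f1.
have df x : interior I x -> is_derive x 1 f (f1 x) /\ is_derive x 1 f1 (f2 x).
  by move/dfI => [/derivableP + /derivableP]; rewrite /f2 /f1 !derive1E.
have [P dP ->] : exists2 P : R -> R, (forall x, a <= x <= b -> is_derive x 1 P (f x))
    & \int[lebesgue_measure]_(x in `[a, b]) f x = P b - P a.
  apply: interior_primitive iI Ia Ib ab _ => x /df[dfx _].
  exact/differentiable_continuous/derivable1_diffP/ex_derive.
have dPf x : a <= x <= b ->
    [/\ is_derive x 1 P (f x), is_derive x 1 f (f1 x) & is_derive x 1 f1 (f2 x)].
  move=> xab; have [? ?] := df x (interior_is_interval iI _ _ Ia Ib _ xab).
  by split => //; exact: dP.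
have f2_le x : a < x < b -> `|f2 x| <= GL_majorant a b `|f2 a| `|f2 b| x.
  exact: GL_class_le GLf (interior_subset Ia) (interior_subset Ib).
have mid := midpoint_primitive_le ab dPf f2_le fam fbm.
have ba0 : 0 < b - a by rewrite subr_gt0.
rewrite (_ : _ - _ = (b - a)^-1 * (P b - P a - (b - a) * f ((a + b) / 2))); last first.
  by field; rewrite gt_eqF.
rewrite (_ : _ * _ * _ = (b - a)^-1 * ((b - a) ^+ 3 / 12 * (12 * ln 2 - 8 * ln 3 + 1)
  * (`|f2 a| + `|f2 b|))); last by field; rewrite gt_eqF.
rewrite normrM gtr0_norm ?invr_gt0 //; apply: ler_wpM2l mid.
by rewrite invr_ge0 ltW.
Qed.

Theorem corollary1 (R : realType) (I : set R) (a b : R) (f : R -> R) :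
  is_interval I ->
  (interior I) a -> (interior I) b -> a < b ->
  abs_continuous_in (interior I) f ->
  (forall x, (interior I) x -> derivable f x 1 /\ derivable (derive1 f) x 1) ->
  lebesgue_measure.-integrable `[a, b] (EFin \o (derive1 (derive1 f))) ->
  GL_class I (fun x => `|(derive1 (derive1 f)) x|) ->
  f a = f b -> f b = f ((a + b) / 2) ->
  `| (b - a)^-1 * (\int[lebesgue_measure]_(x in `[a, b]) f x) - f ((a + b) / 2) |
    <= (b - a) ^+ 2 / 6 * ((12 * ln 2 - 8 * ln 3 + 1) / 2)
       * (`|(derive1 (derive1 f)) a| + `|(derive1 (derive1 f)) b|)
  /\
  (forall M : R, 0 < M -> (forall x, a <= x <= b -> `|(derive1 (derive1 f)) x| < M) ->
   `| (b - a)^-1 * (\int[lebesgue_measure]_(x in `[a, b]) f x) - f ((a + b) / 2) |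
    <= (b - a) ^+ 2 / 3 * ((12 * ln 2 - 8 * ln 3 + 1) / 2) * M).
Proof.
move=> iI Ia Ib ab _ dfI _ GLf fab fbm.
have mean_le := GL_midpoint_le iI Ia Ib ab dfI GLf (etrans fab fbm) fbm.
split => // M M0 f2M; apply: le_trans mean_le _.
rewrite (_ : _ * _ * M = (b - a) ^+ 2 / 6 * ((12 * ln 2 - 8 * ln 3 + 1) / 2) * (M + M));
  last by field.
apply: ler_wpM2l; first by rewrite mulr_ge0 ?divr_ge0 ?sqr_ge0 //; exact: ln_const_ge0.
by apply: lerD; apply/ltW/f2M; rewrite lexx ltW.
Qed.
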